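(* Let $(\hat\sigma(n))_{n\ge0}$ be the sequence of rationals defined by $\hat\sigma(0)=1$, $\hat\sigma(1)=-\tfrac13$, and for $n\ge1$: $\hat\sigma(2n)=\hat\sigma(n)$, $\hat\sigma(2n+1)=-\tfrac12(\hat\sigma(n)+\hat\sigma(n+1))$. Then for all natural numbers $n,a\ge1$, $$\hat\sigma(2^an+1)=\Big(-\frac12\Big)^a\Big(\hat\sigma(n+1)+\frac13\hat\sigma(n)\Big)-\frac13\hat\sigma(n).$$ *)

From mathcomp Require Import all_boot all_algebra.
Set Implicit Arguments. Unset Strict Implicit. Unset Printing Implicit Defensive.
Import GRing.Theory Num.Theory.
Local Open Scope ring_scope.

(* sigma_aux k n computes sigmahat(n) provided the fuel k exceeds n. *)
Fixpoint sigma_aux (k : nat) (n : nat) : rat :=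
  match k with
  | 0%N => 0
  | k'.+1 =>
    match n with
    | 0%N => 1
    | 1%N => -(1/3)
    | _ => if odd n then - (1/2) * (sigma_aux k' n./2 + sigma_aux k' n./2.+1)
           else sigma_aux k' n./2
    end
  end.

Definition sigmahat (n : nat) : rat := sigma_aux n.+1 n.

Lemma sigmahat0 : sigmahat 0 = 1. Proof. by []. Qed.
Lemma sigmahat_check : [:: sigmahat 2; sigmahat 3; sigmahat 4; sigmahat 5] ==
  [:: -(1/3); -(1/2)*(-(1/3) + -(1/3)); -(1/3); -(1/2)*(-(1/3) + (1/3))].
Proof. by vm_compute. Qed.

From mathcomp Require Import all_boot all_algebra.
From mathcomp Require Import zify ring.
Import GRing.Theory.
Local Open Scope ring_scope.

(* Induction on a: since 2^(a+1) n + 1 = 2 (2^a n) + 1, the odd recurrence gives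
   sigmahat(2^(a+1) n + 1) = -1/2 (sigmahat(2^a n) + sigmahat(2^a n + 1)), and
   sigmahat(2^a n) = sigmahat(n) by the even recurrence.  The affine map
   y |-> -1/2 (x + y) has fixed point -x/3, so the deviation from -x/3 is
   multiplied by -1/2 at every step.  The case a = 0 is trivial. *)

Lemma sigma_aux_fuel k k' n :
  (n < k)%N -> (n < k')%N -> sigma_aux k n = sigma_aux k' n.
Proof.
elim: k k' n => [|k IH] [|k'] n //= ltnk ltnk'.
case: n ltnk ltnk' => [|[|n]] ltnk ltnk' //.
have halfE := odd_double_half n.+2; rewrite -muln2 in halfE.
have ltk : (n.+2./2 < k)%N by lia.
have ltk' : (n.+2./2 < k')%N by lia.
case: ifP => odd_n; last by rewrite (IH k').
rewrite odd_n /= in halfE.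
by rewrite (IH k' _ ltk ltk') (IH k' n.+2./2.+1) //; lia.
Qed.

Lemma sigma_auxS k m : (2 <= m)%N ->
  sigma_aux k.+1 m =
  if odd m then - (1/2) * (sigma_aux k m./2 + sigma_aux k m./2.+1)
  else sigma_aux k m./2.
Proof. by case: m => [|[|m]]. Qed.

Lemma sigmahat_double n : (1 <= n)%N -> sigmahat n.*2 = sigmahat n.
Proof.
move=> n_gt0; rewrite /sigmahat sigma_auxS; last by rewrite -muln2; lia.
by rewrite odd_double doubleK; apply: sigma_aux_fuel; rewrite -?muln2; lia.
Qed.

Lemma sigmahat_doubleS n : (1 <= n)%N ->
  sigmahat n.*2.+1 = - (1/2) * (sigmahat n + sigmahat n.+1).
Proof.
move=> n_gt0; rewrite /sigmahat sigma_auxS; last by rewrite -muln2; lia.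
rewrite oddS odd_double (_ : (n.*2.+1)./2 = n) ?(half_bit_double n true) //.
by rewrite (@sigma_aux_fuel _ n.+1 n) ?(@sigma_aux_fuel _ n.+2 n.+1) //
  -?muln2; lia.
Qed.

Lemma sigmahat_pow2 a n : (1 <= n)%N -> sigmahat (2 ^ a * n) = sigmahat n.
Proof.
move=> n_gt0; elim: a => [|a IH]; first by rewrite mul1n.
have : (0 < 2 ^ a * n)%N by rewrite muln_gt0 expn_gt0.
by rewrite expnS -mulnA mul2n => /sigmahat_double ->.
Qed.

Theorem lemma4p1 (n a : nat) : (1 <= n)%N -> (1 <= a)%N ->
  sigmahat (2 ^ a * n).+1 =
    (- (1/2)) ^+ a * (sigmahat n.+1 + (1/3) * sigmahat n) - (1/3) * sigmahat n.
Proof.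
move=> n_gt0 _; elim: a => [|a IH].
  by rewrite expn0 mul1n expr0 mul1r addrK.
have : (0 < 2 ^ a * n)%N by rewrite muln_gt0 expn_gt0.
rewrite expnS -mulnA mul2n => /sigmahat_doubleS ->.
by rewrite sigmahat_pow2 // IH exprS; field.
Qed.
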